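(* For any real numbers $a,b$ with $a\neq\pm b$ and any natural number $n\ge1$: if $n$ is even, $\Psi(a,-b,n)=\Psi(-a,-b,n)$ and $\Phi(a,-b,n)=\Phi(-a,-b,n)$; if $n$ is odd, $\Psi(a,-b,n)=\Phi(-a,-b,n)$ and $\Phi(a,-b,n)=\Psi(-a,-b,n)$.
   Context: $\delta(m)=1$ for $m$ odd, $0$ for $m$ even. $\Psi(a,b,n)$, $\Phi(a,b,n)$ are defined by $\Psi(a,b,0)=2$, $\Psi(a,b,1)=1$, $\Psi(a,b,n+1)=(2a-b)^{\delta(n)}\Psi(a,b,n)-a\Psi(a,b,n-1)$ and $\Phi(a,b,0)=0$, $\Phi(a,b,1)=1$, $\Phi(a,b,n+1)=(2a-b)^{\delta(n+1)}\Phi(a,b,n)-a\Phi(a,b,n-1)$ for $n\ge1$. *)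

From Stdlib Require Import Reals Arith.
Open Scope R_scope.

Definition delta (m : nat) : nat := if Nat.odd m then 1%nat else 0%nat.

Fixpoint Psi (a b : R) (n : nat) {struct n} : R :=
  match n with
  | O => 2
  | S O => 1
  | S ((S m) as k) => (2 * a - b) ^ (delta k) * Psi a b k - a * Psi a b m
  end.

Fixpoint Phi (a b : R) (n : nat) {struct n} : R :=
  match n with
  | O => 0
  | S O => 1
  | S ((S m) as k) => (2 * a - b) ^ (delta (S k)) * Phi a b k - a * Phi a b m
  end.

(* With c = 2a - b, both Psi(a,b,.) and Phi(a,b,.) obey a two-term recurrence whose
   multiplier alternates between c and 1; eliminating the odd-indexed (resp.
   even-indexed) terms yields the same recurrence x(n+4) = -b x(n+2) - a^2 x(n) for
   both sequences.  This recurrence depends on a only through a^2, so Psi(a,-b,.),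
   Phi(a,-b,.), Psi(-a,-b,.) and Phi(-a,-b,.) all satisfy x(n+4) = b x(n+2) - a^2 x(n),
   and the claimed identities reduce to comparing the values at n = 0, 1, 2, 3. *)

From Stdlib Require Import Reals Arith Lia.
Open Scope R_scope.

Definition two_step_rec (p q : R) (u : nat -> R) : Prop :=
  forall n, u (S (S (S (S n)))) = p * u (S (S n)) - q * u n.

Lemma two_step_rec_ext (p q : R) (u v : nat -> R) (i : nat) :
  two_step_rec p q u -> two_step_rec p q v ->
  u i = v i -> u (S (S i)) = v (S (S i)) ->
  forall m, u (i + 2 * m)%nat = v (i + 2 * m)%nat.
Proof.
  intros Hu Hv H0 H2.
  enough (H : forall m, u (i + 2 * m)%nat = v (i + 2 * m)%nat /\
                        u (S (S (i + 2 * m))) = v (S (S (i + 2 * m)))).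
  { intro m. apply H. }
  induction m as [|m [IH0 IH2]].
  - rewrite Nat.add_0_r. split; assumption.
  - replace (i + 2 * S m)%nat with (S (S (i + 2 * m))) by lia.
    split; [assumption|].
    rewrite Hu, Hv, IH0, IH2. reflexivity.
Qed.

Lemma alternating_rec_two_step (c a : R) (j : nat) (x : nat -> R) :
  (forall k, x (S (S k)) = c ^ delta (j + k) * x (S k) - a * x k) ->
  two_step_rec (c - 2 * a) (a * a) x.
Proof.
  intros Hx k.
  rewrite (Hx (S (S k))), (Hx (S k)), (Hx k).
  unfold delta.
  rewrite !Nat.add_succ_r, Nat.odd_succ_succ, Nat.odd_succ, <- Nat.negb_odd.
  destruct (Nat.odd (j + k)); simpl; ring.
Qed.

Lemma Psi_two_step_rec (a b : R) : two_step_rec (- b) (a * a) (Psi a b).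
Proof.
  replace (- b) with (2 * a - b - 2 * a) by ring.
  apply (alternating_rec_two_step _ _ 1). reflexivity.
Qed.

Lemma Phi_two_step_rec (a b : R) : two_step_rec (- b) (a * a) (Phi a b).
Proof.
  replace (- b) with (2 * a - b - 2 * a) by ring.
  apply (alternating_rec_two_step _ _ 2). reflexivity.
Qed.

Theorem theorem13p2 (a b : R) (n : nat) :
  a <> b -> a <> - b -> (1 <= n)%nat ->
  (Nat.even n = true ->
     Psi a (- b) n = Psi (- a) (- b) n /\ Phi a (- b) n = Phi (- a) (- b) n) /\
  (Nat.odd n = true ->
     Psi a (- b) n = Phi (- a) (- b) n /\ Phi a (- b) n = Psi (- a) (- b) n).
Proof.
  intros _ _ _.
  pose proof (Psi_two_step_rec a (- b)) as Psi_pos.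
  pose proof (Phi_two_step_rec a (- b)) as Phi_pos.
  pose proof (Psi_two_step_rec (- a) (- b)) as Psi_neg.
  pose proof (Phi_two_step_rec (- a) (- b)) as Phi_neg.
  rewrite Rmult_opp_opp in Psi_neg, Phi_neg.
  split.
  - intros [m ->]%Nat.even_spec.
    split.
    + apply (two_step_rec_ext _ _ _ _ 0 Psi_pos Psi_neg); simpl; ring.
    + apply (two_step_rec_ext _ _ _ _ 0 Phi_pos Phi_neg); simpl; ring.
  - intros [m ->]%Nat.odd_spec. rewrite Nat.add_comm.
    split.
    + apply (two_step_rec_ext _ _ _ _ 1 Psi_pos Phi_neg); simpl; ring.
    + apply (two_step_rec_ext _ _ _ _ 1 Phi_pos Psi_neg); simpl; ring.
Qed.
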